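(* Any efficient strategy is regret-free.
   Context: Let $\mathcal{X}$ be a finite set of alternatives. A proto-ranking is an irreflexive and transitive binary relation on $\mathcal{X}$; a ranking is a total proto-ranking; a tournament is a total and asymmetric binary relation on $\mathcal{X}$. The chair has a fixed preference $\succ$, a ranking on $\mathcal{X}$. Interaction: given a tournament $\mathrel{W}$, start from $R_0=\varnothing$; in each period with $R_{t-1}$ not total the chair offers a pair $\{x,y\}$ unranked by $R_{t-1}$, the winner is $x$ if $x\mathrel{W}y$ and $y$ otherwise, and $R_t$ is the transitive closure of $R_{t-1}\cup\{(\text{winner},\text{loser})\}$; stop when $R_t$ is total. A strategy assigns to each non-terminal history (sequence of (winner, loser) pairs) a pair unranked at it; its outcome under $\mathrel{W}$ is the final ranking. A ranking is $\mathrel{W}$-feasible if it is the outcome under $\mathrel{W}$ of some strategy. $R$ is more aligned with $\succ$ than $R'$ if for all $x\succ y$, $xR'y$ implies $xRy$. A ranking is $\mathrel{W}$-unimprovable if no other $\mathrel{W}$-feasible ranking is more aligned with $\succ$. A strategy is regret-free if for every tournament $\mathrel{W}$ its outcome under $\mathrel{W}$ is $\mathrel{W}$-unimprovable. A ranking $R$ is $\mathrel{W}$-efficient if $x\succ y$ and $x\mathrel{W}y$ imply $xRy$; a strategy is efficient if for every tournament $\mathrel{W}$ its outcome under $\mathrel{W}$ is $\mathrel{W}$-efficient. *)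

From mathcomp Require Import all_boot.
Set Implicit Arguments. Unset Strict Implicit. Unset Printing Implicit Defensive.

Section Defs.
Variable X : finType.

Definition irreflexive_rel (R : rel X) := forall x, ~~ R x x.
Definition transitive_rel (R : rel X) := forall x y z, R x y -> R y z -> R x z.
Definition total_rel (R : rel X) := forall x y, x != y -> R x y || R y x.
Definition asymmetric_rel (R : rel X) := forall x y, R x y -> ~~ R y x.

Definition proto_ranking (R : rel X) := irreflexive_rel R /\ transitive_rel R.
Definition ranking (R : rel X) := proto_ranking R /\ total_rel R.
Definition tournament (W : rel X) := total_rel W /\ asymmetric_rel W.

(* (non-reflexive) transitive closure *)
Definition tclosure (R : rel X) : rel X :=
  fun x y => [exists z, R x z && connect R z y].

(* A history is a sequence of (winner, loser) pairs. *)
Definition history := seq (X * X).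

Definition add_pair (R : rel X) (p : X * X) : rel X :=
  tclosure (fun a b => R a b || ((a, b) == p)).
Definition Rof (h : history) : rel X := foldl add_pair (fun _ _ => false) h.

Definition terminal (h : history) := total_rel (Rof h).

Definition unranked (R : rel X) (p : X * X) :=
  [&& p.1 != p.2, ~~ R p.1 p.2 & ~~ R p.2 p.1].

Definition strategy := history -> X * X.
Definition valid_strategy (s : strategy) :=
  forall h : history, ~ terminal h -> unranked (Rof h) (s h).

(* winner first *)
Definition play_pair (W : rel X) (p : X * X) : X * X :=
  if W p.1 p.2 then p else (p.2, p.1).

Inductive play (s : strategy) (W : rel X) : history -> history -> Prop :=
| play_stop h : terminal h -> play s W h h
| play_step h h' : ~ terminal h -> play s W (rcons h (play_pair W (s h))) h' ->
                   play s W h h'.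

Definition outcome (s : strategy) (W : rel X) (R : rel X) :=
  exists h, play s W [::] h /\ R =2 Rof h.

Definition feasible (W : rel X) (R : rel X) :=
  ranking R /\ exists s, valid_strategy s /\ outcome s W R.

Definition more_aligned (pref : rel X) (R R' : rel X) :=
  forall x y, pref x y -> R' x y -> R x y.

Definition unimprovable (pref W : rel X) (R : rel X) :=
  forall R', feasible W R' -> ~ (R' =2 R) -> ~ more_aligned pref R' R.

Definition regret_free (pref : rel X) (s : strategy) :=
  forall W, tournament W -> forall R, outcome s W R -> unimprovable pref W R.

Definition efficient_ranking (pref W : rel X) (R : rel X) :=
  forall x y, pref x y -> W x y -> R x y.

Definition efficient (pref : rel X) (s : strategy) :=
  forall W, tournament W -> forall R, outcome s W R -> efficient_ranking pref W R.

End Defs.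

From Pilot Require Import Defs.
From mathcomp Require Import all_boot.
Set Implicit Arguments. Unset Strict Implicit.

(* Each comparison ranks its W-winner first, so every W-feasible ranking R'
   is the transitive closure of the pairs it ranks in agreement with W.  Let R
   be the outcome of an efficient strategy and R' more aligned than R.  If
   R' ranks a above b with W a b but R does not, then R ranks b above a;
   efficiency excludes a being preferred to b, so b is preferred to a, and
   alignment makes R' rank b above a too, a contradiction.  Hence R' is
   contained in R, and a ranking contained in another one equals it. *)

Section TransitiveClosure.
Variable X : finType.
Implicit Types S T : rel X.

Lemma tclosure1 S : subrel S (tclosure S).
Proof. by move=> x y Sxy; apply/existsP; exists y; rewrite Sxy connect0. Qed.

Lemma tclosure_trans S : transitive_rel (tclosure S).
Proof.
move=> x y z /existsP[u /andP[Sxu cuy]] /existsP[v /andP[Syv cvz]].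
apply/existsP; exists u; rewrite Sxu /=; apply: connect_trans cuy _.
exact: connect_trans (connect1 Syv) cvz.
Qed.

Lemma tclosure_min S T :
  subrel S T -> transitive_rel T -> subrel (tclosure S) T.
Proof.
move=> sST trT x y /existsP[z /andP[Sxz /connectP[p]]].
elim: p x z Sxz => [|w p IHp] x z Sxz /=; first by move=> _ ->; exact: sST.
case/andP=> Szw pw Ey; exact: trT (sST _ _ Sxz) (IHp _ _ Szw pw Ey).
Qed.

Lemma tclosure_sub S T : subrel S T -> subrel (tclosure S) (tclosure T).
Proof.
move=> sST; apply: tclosure_min (@tclosure_trans T) => x y /sST.
exact: tclosure1.
Qed.

(* Adding (a, b) only creates pairs (x, y) with x = a or R x a, and y = b or
   R b y; as no element lies between b and a, no cycle appears. *)
Lemma add_pair_proto (R : rel X) (a b : X) :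
  proto_ranking R -> a != b -> ~~ R b a ->
  proto_ranking (Defs.add_pair R (a, b)).
Proof.
move=> [irrR trR] neq_ab nRba; split; last exact: tclosure_trans.
have no_between v : (v == b) || R b v -> (v == a) || R v a -> False.
  move=> /orP[/eqP-> | Rbv] /orP[/eqP Eva | Rva].
  - by rewrite Eva eqxx in neq_ab.
  - by rewrite Rva in nRba.
  - by rewrite -Eva Rbv in nRba.
  - by rewrite (trR _ _ _ Rbv Rva) in nRba.
pose T x y := R x y || ((x == a) || R x a) && ((y == b) || R b y).
have sT : subrel (fun x y => R x y || ((x, y) == (a, b))) T.
  by move=> x y /orP[Rxy | /eqP[-> ->]]; rewrite /T ?Rxy // !eqxx orbT.
have trT : transitive_rel T.
  move=> x y z /orP[Rxy | /andP[Hx Hy]] /orP[Ryz | /andP[Hy' Hz]].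
  - by rewrite /T (trR _ _ _ Rxy Ryz).
  - rewrite /T Hz andbT; case/orP: Hy' => [/eqP Eya | Rya].
      by rewrite -Eya Rxy !orbT.
    by rewrite (trR _ _ _ Rxy Rya) !orbT.
  - rewrite /T Hx /=; case/orP: Hy => [/eqP Eyb | Rby].
      by rewrite -Eyb Ryz !orbT.
    by rewrite (trR _ _ _ Rby Ryz) !orbT.
  - by case: (no_between y Hy Hy').
move=> x; apply/negP => /(tclosure_min sT trT) /orP[Rxx | /andP[Hxa Hbx]].
  by have := irrR x; rewrite Rxx.
exact: no_between x Hbx Hxa.
Qed.

End TransitiveClosure.

Section Histories.
Variable X : finType.
Implicit Types (h : history X) (p : X * X).

Lemma Rof_rcons h p : Rof (rcons h p) = Defs.add_pair (Rof h) p.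
Proof. by rewrite /Rof foldl_rcons. Qed.

Lemma Rof_mem h a b : (a, b) \in h -> Rof h a b.
Proof.
elim/last_ind: h => [|h p IHh] //.
rewrite mem_rcons in_cons Rof_rcons => /orP[/eqP<- | /IHh Rab].
  by apply: tclosure1; rewrite /= eqxx orbT.
by apply: tclosure1; rewrite /= Rab.
Qed.

Lemma Rof_sub_tclosure h : subrel (Rof h) (tclosure [rel a b | (a, b) \in h]).
Proof.
elim/last_ind: h => [|h p IHh] //; rewrite Rof_rcons.
apply: tclosure_min (@tclosure_trans _ _) => x y /orP[/IHh | /eqP Exy].
  by apply: tclosure_sub => a b /=; rewrite mem_rcons in_cons orbC => ->.
by apply: tclosure1; rewrite /= Exy mem_rcons mem_head.
Qed.

Lemma play_pair_unranked (W R : rel X) p :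
  unranked R p -> unranked R (play_pair W p).
Proof.
rewrite /play_pair; case: ifP => // _.
by case/and3P=> neq_p nR12 nR21; rewrite /unranked /= eq_sym neq_p nR12 nR21.
Qed.

Lemma play_pairW (W : rel X) p :
  tournament W -> p.1 != p.2 -> W (play_pair W p).1 (play_pair W p).2.
Proof.
move=> [totW _] neq_p; rewrite /play_pair; case: ifP => //= nWp.
by have := totW _ _ neq_p; rewrite nWp.
Qed.

Lemma play_ind (s : strategy X) (W : rel X) (P : history X -> Prop) :
  (forall h, ~ terminal h -> P h -> P (rcons h (play_pair W (s h)))) ->
  forall h h', play s W h h' -> P h -> P h'.
Proof. by move=> Pstep h h'; elim=> // h0 h1 nterm _ IH /(Pstep _ nterm). Qed.

Section Interaction.
Variables (s : strategy X) (W : rel X).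
Hypotheses (valid_s : valid_strategy s) (tourW : tournament W).

Lemma play_terminal h h' : play s W h h' -> terminal h'.
Proof. by elim. Qed.

Lemma play_proto_ranking h : play s W [::] h -> proto_ranking (Rof h).
Proof.
move=> pl; apply: (play_ind (P := fun h => proto_ranking (Rof h)) _ pl)
  => // h0 nterm protoR.
have := play_pair_unranked W (valid_s nterm).
case: (play_pair W (s h0)) => a b /and3P[neq_ab _ nRba].
by rewrite Rof_rcons; apply: add_pair_proto.
Qed.

Lemma play_edgesW h : play s W [::] h -> all (fun p => W p.1 p.2) h.
Proof.
move=> pl; apply: (play_ind (P := fun h => all (fun p => W p.1 p.2) h) _ pl)
  => // h0 nterm allW.
have /and3P[neq_p _ _] := valid_s nterm.
by rewrite all_rcons allW andbT play_pairW.
Qed.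

Lemma outcome_ranking R : outcome s W R -> ranking R.
Proof.
case=> h [pl eqR]; have [irrR trR] := play_proto_ranking pl.
split; first split.
- by move=> x; rewrite eqR.
- by move=> x y z; rewrite !eqR; apply: trR.
- by move=> x y; rewrite !eqR; apply: (play_terminal pl).
Qed.

End Interaction.

Lemma feasible_sub_tclosure (W R : rel X) :
  tournament W -> feasible W R ->
  subrel R (tclosure [rel a b | W a b && R a b]).
Proof.
move=> tourW [_ [s [valid_s [h [pl eqR]]]]] x y; rewrite eqR.
move=> /Rof_sub_tclosure; apply: tclosure_sub => a b /= hab.
by rewrite eqR Rof_mem // andbT (allP (play_edgesW valid_s tourW pl) _ hab).
Qed.

End Histories.

Section Alignment.
Variable X : finType.
Implicit Types pref W R : rel X.

Lemma aligned_efficient_sub pref W R (R' : rel X) a b :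
  total_rel pref -> total_rel R -> efficient_ranking pref W R ->
  proto_ranking R' -> more_aligned pref R' R -> W a b -> R' a b -> R a b.
Proof.
move=> totP totR effR [irrR' trR'] alR' Wab R'ab.
have neq_ab : a != b by apply: contraTneq R'ab => ->; apply: irrR'.
case/orP: (totP _ _ neq_ab) => [Pab | Pba]; first exact: effR.
case: (boolP (R a b)) => // nRab.
have Rba : R b a by have := totR _ _ neq_ab; rewrite (negbTE nRab).
by have := irrR' a; rewrite (trR' _ _ _ R'ab (alR' _ _ Pba Rba)).
Qed.

Lemma ranking_sub_eq R (R' : rel X) :
  proto_ranking R -> total_rel R' -> subrel R' R -> R' =2 R.
Proof.
move=> [irrR trR] totR' sRR' x y; apply/idP/idP => [/sRR' // | Rxy].
have neq_xy : x != y by apply: contraTneq Rxy => ->; apply: irrR.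
case/orP: (totR' _ _ neq_xy) => // /sRR' Ryx.
by have := irrR x; rewrite (trR _ _ _ Rxy Ryx).
Qed.

End Alignment.

Theorem corollary1 (X : finType) (pref : rel X) (s : strategy X) :
  ranking pref -> valid_strategy s -> efficient pref s -> regret_free pref s.
Proof.
move=> [_ totP] valid_s eff W tourW R outR R' feasR' neqR' alR'.
have [protoR totR] := outcome_ranking valid_s outR.
have [[protoR' totR'] _] := feasR'.
apply/neqR'/(ranking_sub_eq protoR totR') => x y.
move=> /(feasible_sub_tclosure tourW feasR').
apply: (tclosure_min _ protoR.2) => a b /andP[Wab R'ab].
exact: (aligned_efficient_sub totP totR (eff W tourW R outR) protoR' alR').
Qed.
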